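(* Let $\mathcal{R}:L^2(\mathcal{X},\mathcal{V},\hat P)\to\mathbb{R}$ be $\lambda$-strongly convex and $\Lambda$-strongly smooth, let $\mathcal{H}\subset L^2(\mathcal{X},\mathcal{V},\hat P)$ be a restriction set with edge $\gamma$, and let $f^*=\operatorname{argmin}_{f}\mathcal{R}[f]$. Given a starting point $f_0$ and constant step size $\eta_t=\frac1\Lambda$, after $T$ iterations of the Naive Gradient Projection Algorithm the iterate $f_T$ satisfies $$\mathcal{R}[f_T]-\mathcal{R}[f^*]\le\left(1-\frac{\gamma^2\lambda}{\Lambda}\right)^T\left(\mathcal{R}[f_0]-\mathcal{R}[f^*]\right).$$
   Context: $L^2(\mathcal{X},\mathcal{V},\hat P)$: for training points $x_1,\dots,x_N\in\mathcal{X}$ and a real inner-product space $\mathcal{V}$, the Hilbert space of (equivalence classes of) functions $f:\mathcal{X}\to\mathcal{V}$ with inner product $\langle f,g\rangle=\frac1N\sum_{n=1}^N\langle f(x_n),g(x_n)\rangle_{\mathcal{V}}$ and norm $\|f\|=\sqrt{\langle f,f\rangle}$. A subgradient of $\mathcal{R}$ at $f$ is any $\nabla$ with $\mathcal{R}[g]\ge\mathcal{R}[f]+\langle g-f,\nabla\rangle$ for all $g$; $\nabla\mathcal{R}[f]$ denotes a (the set of) subgradient(s). $\mathcal{R}$ is $\lambda$-strongly convex if $\mathcal{R}[f']\ge\mathcal{R}[f]+\langle\nabla\mathcal{R}[f],f'-f\rangle+\frac\lambda2\|f'-f\|^2$ for all $f,f'$, and $\Lambda$-strongly smooth if $\mathcal{R}[f']\le\mathcal{R}[f]+\langle\nabla\mathcal{R}[f],f'-f\rangle+\frac\Lambda2\|f'-f\|^2$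 for all $f,f'$ ($\lambda,\Lambda>0$). Edge: a set $\mathcal{H}$ has edge $\gamma\in[0,1]$ if for every $g$ there exists $h\in\mathcal{H}$ such that either $\langle g,h\rangle\ge\gamma\|g\|\|h\|$ or $\|g-h\|^2\le(1-\gamma^2)\|g\|^2$. Projecting $g$ onto $\mathcal{H}$: choosing $h^*\in\mathcal{H}$ either as a maximizer of $\langle g,h\rangle/\|h\|$ over $h\in\mathcal{H}$, or, when $\mathcal{H}$ is closed under scalar multiplication, as a minimizer of $\|g-h\|^2$ over $h\in\mathcal{H}$ (minimizers/maximizers assumed to exist). Naive Gradient Projection Algorithm: given $f_0$ and step sizes $\eta_t$, for $t=1,\dots,T$: compute a subgradient $\nabla_t\in\nabla\mathcal{R}[f_{t-1}]$, project $\nabla_t$ onto $\mathcal{H}$ obtaining $h^*$, and set $f_t=f_{t-1}-\eta_t\frac{\langle h^*,\nabla_t\rangle}{\|h^*\|^2}h^*$. *)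

From Stdlib Require Import Reals Lra Lia.
Open Scope R_scope.

Record InnerProductSpace := {
  ips_car :> Type;
  ips_zero : ips_car;
  ips_add : ips_car -> ips_car -> ips_car;
  ips_opp : ips_car -> ips_car;
  ips_scal : R -> ips_car -> ips_car;
  ips_inner : ips_car -> ips_car -> R;
  ips_addA : forall u v w, ips_add u (ips_add v w) = ips_add (ips_add u v) w;
  ips_addC : forall u v, ips_add u v = ips_add v u;
  ips_add0 : forall u, ips_add u ips_zero = u;
  ips_addN : forall u, ips_add u (ips_opp u) = ips_zero;
  ips_scal1 : forall u, ips_scal 1 u = u;
  ips_scalA : forall a b u, ips_scal a (ips_scal b u) = ips_scal (a * b) u;
  ips_scalDr : forall a u v, ips_scal a (ips_add u v) = ips_add (ips_scal a u) (ips_scal a v);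
  ips_scalDl : forall a b u, ips_scal (a + b) u = ips_add (ips_scal a u) (ips_scal b u);
  ips_innerC : forall u v, ips_inner u v = ips_inner v u;
  ips_innerDl : forall u v w, ips_inner (ips_add u v) w = ips_inner u w + ips_inner v w;
  ips_innerZl : forall a u v, ips_inner (ips_scal a u) v = a * ips_inner u v;
  ips_inner_ge0 : forall u, 0 <= ips_inner u u;
  ips_inner_eq0 : forall u, ips_inner u u = 0 -> u = ips_zero
}.

Fixpoint rsum (n : nat) (F : nat -> R) : R :=
  match n with
  | O => 0
  | S k => rsum k F + F k
  end.

Definition fadd {X : Type} (V : InnerProductSpace) (f g : X -> V) : X -> V :=
  fun y => ips_add V (f y) (g y).
Definition fscal {X : Type} (V : InnerProductSpace) (c : R) (f : X -> V) : X -> V :=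
  fun y => ips_scal V c (f y).
Definition fsub {X : Type} (V : InnerProductSpace) (f g : X -> V) : X -> V :=
  fun y => ips_add V (f y) (ips_opp V (g y)).

(* Inner product and norm of L^2(X, V, P_hat), for training points
   x 0, ..., x (N-1). *)
Definition l2inner {X : Type} (V : InnerProductSpace) (N : nat) (x : nat -> X)
  (f g : X -> V) : R :=
  / INR N * rsum N (fun n => ips_inner V (f (x n)) (g (x n))).
Definition l2norm {X : Type} (V : InnerProductSpace) (N : nat) (x : nat -> X)
  (f : X -> V) : R :=
  sqrt (l2inner V N x f f).

Section Defs.
Context {X : Type} (V : InnerProductSpace) (N : nat) (x : nat -> X).
Local Notation inner := (l2inner V N x).
Local Notation norm := (l2norm V N x).

Definition is_subgradient (Rk : (X -> V) -> R) (f nabla : X -> V) : Prop :=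
  forall g, Rk g >= Rk f + inner (fsub V g f) nabla.

Definition strongly_convex (Rk : (X -> V) -> R) (lam : R) : Prop :=
  forall f f' nabla, is_subgradient Rk f nabla ->
    Rk f' >= Rk f + inner nabla (fsub V f' f) + lam / 2 * (norm (fsub V f' f)) ^ 2.

Definition strongly_smooth (Rk : (X -> V) -> R) (Lam : R) : Prop :=
  forall f f' nabla, is_subgradient Rk f nabla ->
    Rk f' <= Rk f + inner nabla (fsub V f' f) + Lam / 2 * (norm (fsub V f' f)) ^ 2.

(* H has edge gamma (the h in the first alternative must be nonzero, so that
   the correlation <g,h>/||h|| is meaningful). *)
Definition has_edge (H : (X -> V) -> Prop) (gamma : R) : Prop :=
  0 <= gamma <= 1 /\
  forall g, exists h, H h /\
    ((0 < norm h /\ inner g h >= gamma * norm g * norm h) \/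
     (norm (fsub V g h)) ^ 2 <= (1 - gamma ^ 2) * (norm g) ^ 2).

Definition closed_under_scaling (H : (X -> V) -> Prop) : Prop :=
  forall c h, H h -> H (fscal V c h).

(* h is a projection of g onto H (either of the two allowed rules). *)
Definition is_projection (H : (X -> V) -> Prop) (g h : X -> V) : Prop :=
  H h /\
  ((0 < norm h /\
    forall h', H h' -> 0 < norm h' -> inner g h' / norm h' <= inner g h / norm h)
   \/
   (closed_under_scaling H /\
    forall h', H h' -> (norm (fsub V g h)) ^ 2 <= (norm (fsub V g h')) ^ 2)).

(* f 0, ..., f T are the iterates of the Naive Gradient Projection Algorithm
   with step sizes eta, subgradients grad t and projections hp t (t = 1..T). *)
Definition ngp_iterates (Rk : (X -> V) -> R) (H : (X -> V) -> Prop)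
  (eta : nat -> R) (T : nat) (f grad hp : nat -> X -> V) : Prop :=
  forall t, (1 <= t <= T)%nat ->
    is_subgradient Rk (f (t - 1)%nat) (grad t) /\
    is_projection H (grad t) (hp t) /\
    forall y, f t y =
      fsub V (f (t - 1)%nat)
        (fscal V (eta t * (inner (hp t) (grad t) / (norm (hp t)) ^ 2)) (hp t)) y.
End Defs.

From Stdlib Require Import Reals Lra Lia FunctionalExtensionality.
Open Scope R_scope.

(* Write <.,.> and ||.|| for the empirical L^2 inner product and norm, and
   Q(g,h) = <g,h>^2 / <h,h> for the energy of g captured by the line through h
   (zero when <h,h> = 0).  The proof combines three facts.
   1. Projection: if H has edge gamma and h is a projection of g onto H, then
      Q(g,h) >= gamma^2 ||g||^2.  The edge provides some h0 in H capturing that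
      much energy with <g,h0> >= 0, and either projection rule captures at
      least as much as h0 (for the least-squares rule, the best rescaling of
      h0 is a competitor).
   2. Descent: by strong smoothness, the step of length 1/Lambda along the
      projected direction decreases R by at least Q(g,h) / (2 Lambda).
   3. Gradient domination: by strong convexity, 2 lambda (R[p] - R[f]) <=
      ||g||^2 for every subgradient g at p and every f.
   Hence every iteration contracts the excess risk by 1 - gamma^2 lambda/Lambda,
   and a geometric-decay lemma for nonnegative sequences concludes. *)

Lemma ips_inner0l (V : InnerProductSpace) (v : V) : ips_inner V (ips_zero V) v = 0.
Proof.
  pose proof (ips_innerDl V (ips_zero V) (ips_zero V) v) as E.
  rewrite ips_add0 in E. lra.
Qed.

Lemma ips_innerNl (V : InnerProductSpace) (u v : V) :
  ips_inner V (ips_opp V u) v = - ips_inner V u v.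
Proof.
  pose proof (ips_innerDl V u (ips_opp V u) v) as E.
  rewrite ips_addN, ips_inner0l in E. lra.
Qed.

Lemma rsum_ext (n : nat) (F G : nat -> R) :
  (forall k, F k = G k) -> rsum n F = rsum n G.
Proof. intros E; induction n as [|n IH]; simpl; [reflexivity | now rewrite IH, E]. Qed.

Lemma rsum_add (n : nat) (F G : nat -> R) :
  rsum n (fun k => F k + G k) = rsum n F + rsum n G.
Proof. induction n as [|n IH]; simpl; [ring | rewrite IH; ring]. Qed.

Lemma rsum_scal (n : nat) (c : R) (F : nat -> R) :
  rsum n (fun k => c * F k) = c * rsum n F.
Proof. induction n as [|n IH]; simpl; [ring | rewrite IH; ring]. Qed.

Lemma rsum_ge0 (n : nat) (F : nat -> R) : (forall k, 0 <= F k) -> 0 <= rsum n F.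
Proof. intros P; induction n as [|n IH]; simpl; [lra | specialize (P n); lra]. Qed.

Section L2Algebra.
Variables (V : InnerProductSpace) (X : Type) (N : nat) (x : nat -> X).
Local Notation inner := (l2inner V N x).
Local Notation norm := (l2norm V N x).

(* The empirical inner product is a symmetric, positive semidefinite
   bilinear form (no assumption on N is needed: for N = 0 it vanishes). *)
Lemma inner_sym (f g : X -> V) : inner f g = inner g f.
Proof. unfold l2inner. f_equal. apply rsum_ext; intro; apply ips_innerC. Qed.

Lemma inner_subl (f g h : X -> V) : inner (fsub V f g) h = inner f h - inner g h.
Proof.
  unfold l2inner, fsub.
  rewrite (rsum_ext _ _ (fun k => ips_inner V (f (x k)) (h (x k))
                                  + (-1) * ips_inner V (g (x k)) (h (x k)))).
  - rewrite rsum_add, rsum_scal. ring.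
  - intro k. rewrite ips_innerDl, ips_innerNl. ring.
Qed.

Lemma inner_scall (c : R) (f h : X -> V) : inner (fscal V c f) h = c * inner f h.
Proof.
  unfold l2inner, fscal.
  rewrite (rsum_ext _ _ (fun k => c * ips_inner V (f (x k)) (h (x k)))).
  - rewrite rsum_scal. ring.
  - intro k. apply ips_innerZl.
Qed.

Lemma inner_subr (f g h : X -> V) : inner h (fsub V f g) = inner h f - inner h g.
Proof. now rewrite inner_sym, inner_subl, (inner_sym f), (inner_sym g). Qed.

Lemma inner_scalr (c : R) (f h : X -> V) : inner h (fscal V c f) = c * inner h f.
Proof. now rewrite inner_sym, inner_scall, (inner_sym f). Qed.

Lemma inner_self_ge0 (f : X -> V) : 0 <= inner f f.
Proof.
  unfold l2inner. apply Rmult_le_pos.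
  - destruct N as [|n]; [simpl; rewrite Rinv_0; lra |].
    left; apply Rinv_0_lt_compat, lt_0_INR; lia.
  - apply rsum_ge0; intro; apply ips_inner_ge0.
Qed.

Lemma norm_sq (f : X -> V) : norm f ^ 2 = inner f f.
Proof. apply pow2_sqrt, inner_self_ge0. Qed.

Lemma norm_sub_scal_sq (g h : X -> V) (c : R) :
  norm (fsub V g (fscal V c h)) ^ 2
  = inner g g - 2 * c * inner g h + c ^ 2 * inner h h.
Proof.
  rewrite norm_sq, !inner_subl, !inner_subr, !inner_scall, !inner_scalr,
    (inner_sym h g).
  ring.
Qed.

(* A null vector is orthogonal to everything: otherwise ||g - t h||^2 would be
   negative for a suitable t. *)
Lemma inner_null_orth (g h : X -> V) : inner h h = 0 -> inner g h = 0.
Proof.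
  intros Hh. destruct (Req_dec (inner g h) 0) as [|Hgh]; [assumption | exfalso].
  pose proof (inner_self_ge0 (fsub V g (fscal V ((inner g g + 1) / (2 * inner g h)) h)))
    as P.
  rewrite <- norm_sq, norm_sub_scal_sq, Hh in P.
  replace (inner g g - 2 * ((inner g g + 1) / (2 * inner g h)) * inner g h
           + ((inner g g + 1) / (2 * inner g h)) ^ 2 * 0) with (-1) in P
    by (field; assumption).
  lra.
Qed.

(* Energy of g captured by the line through h: the squared length of the
   orthogonal projection of g onto that line. *)
Definition captured (g h : X -> V) : R := inner g h ^ 2 / inner h h.

Lemma captured_ge0 (g h : X -> V) : 0 <= captured g h.
Proof.
  unfold captured. destruct (inner_self_ge0 h) as [Hh | Hh].
  - apply Rmult_le_pos; [apply pow2_ge_0 | left; apply Rinv_0_lt_compat, Hh].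
  - rewrite <- Hh, Rdiv_0_r. lra.
Qed.

Lemma captured_ge (g h : X -> V) (c : R) :
  2 * c * inner g h - c ^ 2 * inner h h <= captured g h.
Proof.
  unfold captured. destruct (inner_self_ge0 h) as [Hh | Hh].
  - apply Rmult_le_reg_r with (inner h h); [assumption |].
    replace (inner g h ^ 2 / inner h h * inner h h) with (inner g h ^ 2) by (field; lra).
    pose proof (pow2_ge_0 (c * inner h h - inner g h)). nra.
  - rewrite (inner_null_orth g h (eq_sym Hh)), <- Hh. unfold Rdiv. rewrite Rinv_0. lra.
Qed.

Lemma captured_attained (g h : X -> V) :
  let c := inner g h / inner h h in
  2 * c * inner g h - c ^ 2 * inner h h = captured g h.
Proof.
  unfold captured. destruct (inner_self_ge0 h) as [Hh | Hh].
  - simpl. field. lra.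
  - rewrite (inner_null_orth g h (eq_sym Hh)), <- Hh. unfold Rdiv. rewrite Rinv_0. ring.
Qed.

Lemma captured_correlation (g h : X -> V) :
  0 < norm h -> captured g h = (inner g h / norm h) ^ 2.
Proof. intros Hh. unfold captured. rewrite <- norm_sq. field. lra. Qed.

End L2Algebra.

Section Projection.
Variables (V : InnerProductSpace) (X : Type) (N : nat) (x : nat -> X).
Variables (H : (X -> V) -> Prop) (gamma : R).
Local Notation inner := (l2inner V N x).
Local Notation norm := (l2norm V N x).
Local Notation captured := (captured V X N x).

Lemma edge_witness (g : X -> V) :
  has_edge V N x H gamma ->
  exists h0, H h0 /\ 0 <= inner g h0 /\ gamma ^ 2 * inner g g <= captured g h0.
Proof.
  intros [[Hg0 _] Hedge]. destruct (Hedge g) as [h0 [Hh0 [[Hpos Hcorr] | Hres]]].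
  - (* correlation alternative: square <g,h0>/||h0|| >= gamma ||g|| >= 0 *)
    pose proof (norm_sq V X N x g) as Eg.
    assert (Pg : 0 <= norm g) by apply sqrt_pos.
    assert (Hlow : 0 <= gamma * norm g * norm h0)
      by (repeat apply Rmult_le_pos; lra).
    exists h0. split; [assumption | split; [lra |]].
    rewrite captured_correlation by assumption.
    assert (gamma * norm g <= inner g h0 / norm h0).
    { apply Rmult_le_reg_r with (norm h0); [assumption |].
      replace (inner g h0 / norm h0 * norm h0) with (inner g h0) by (field; lra). lra. }
    rewrite <- Eg. replace (gamma ^ 2 * norm g ^ 2) with ((gamma * norm g) ^ 2) by ring.
    apply pow_incr. split; [apply Rmult_le_pos |]; assumption.
  - (* residual alternative: ||g||^2 - Q(g,h0) <= ||g - h0||^2 <= (1 - gamma^2) ||g||^2,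
       and expanding ||g - h0||^2 also shows <g,h0> >= 0 *)
    rewrite !norm_sq in Hres.
    rewrite inner_subl, !inner_subr, (inner_sym V X N x h0 g) in Hres.
    pose proof (captured_ge V X N x g h0 1) as Hcap.
    pose proof (inner_self_ge0 V X N x g). pose proof (inner_self_ge0 V X N x h0).
    exists h0. split; [assumption | split; nra].
Qed.

Lemma projection_dominates (g h h0 : X -> V) :
  is_projection V N x H g h -> H h0 -> 0 <= inner g h0 ->
  captured g h0 <= captured g h.
Proof.
  intros [_ [[Hpos Hmax] | [Hscal Hmin]]] Hh0 Hg0.
  -
    destruct (Rle_lt_or_eq_dec 0 (norm h0) (sqrt_pos _)) as [Hpos0 | Hnull].
    + specialize (Hmax h0 Hh0 Hpos0).
      rewrite !captured_correlation by assumption.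
      assert (0 <= inner g h0 / norm h0) by (unfold Rdiv; apply Rmult_le_pos;
          [lra | left; apply Rinv_0_lt_compat; lra]).
      nra.
    + assert (Hnull' : inner h0 h0 = 0) by (rewrite <- norm_sq, <- Hnull; ring).
      unfold captured at 1. rewrite Hnull', Rdiv_0_r. apply captured_ge0.
  - (* least squares: the best multiple c0 h0 of h0 lies in H, so
       ||g||^2 - Q(g,h) <= ||g - h||^2 <= ||g - c0 h0||^2 = ||g||^2 - Q(g,h0) *)
    set (c0 := inner g h0 / inner h0 h0).
    specialize (Hmin _ (Hscal c0 h0 Hh0)).
    rewrite norm_sub_scal_sq in Hmin.
    pose proof (captured_attained V X N x g h0) as Eopt. fold c0 in Eopt.
    replace (fsub V g h) with (fsub V g (fscal V 1 h)) in Hmin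
      by (extensionality y; unfold fsub, fscal; now rewrite ips_scal1).
    rewrite norm_sub_scal_sq in Hmin.
    pose proof (captured_ge V X N x g h 1). lra.
Qed.

Lemma projection_captures (g h : X -> V) :
  has_edge V N x H gamma -> is_projection V N x H g h ->
  gamma ^ 2 * inner g g <= captured g h.
Proof.
  intros Hedge Hproj. destruct (edge_witness g Hedge) as [h0 [Hh0 [Hg0 Hcap]]].
  pose proof (projection_dominates g h h0 Hproj Hh0 Hg0). lra.
Qed.

End Projection.

Section Descent.
Variables (V : InnerProductSpace) (X : Type) (N : nat) (x : nat -> X).
Variable Rk : (X -> V) -> R.
Local Notation inner := (l2inner V N x).
Local Notation norm := (l2norm V N x).
Local Notation captured := (captured V X N x).

Lemma smooth_step_descent (Lam : R) (p g h : X -> V) :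
  0 < Lam -> strongly_smooth V N x Rk Lam -> is_subgradient V N x Rk p g ->
  Rk (fsub V p (fscal V (/ Lam * (inner h g / norm h ^ 2)) h))
  <= Rk p - captured g h / (2 * Lam).
Proof.
  intros HLam Hsmooth Hsub.
  set (c := / Lam * (inner h g / norm h ^ 2)).
  set (d := fsub V (fsub V p (fscal V c h)) p).
  pose proof (Hsmooth p (fsub V p (fscal V c h)) g Hsub) as Hs. fold d in Hs.
  assert (Hlin : inner g d = - c * inner g h).
  { unfold d. rewrite !inner_subr, inner_scalr. ring. }
  assert (Hquad : norm d ^ 2 = c ^ 2 * inner h h).
  { unfold d. rewrite norm_sq, !inner_subl, !inner_subr, !inner_scall, !inner_scalr,
      (inner_sym V X N x h p). ring. }
  (* the step length 1/Lambda is the optimal one for the quadratic upper bound *)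
  assert (Hgain : c * inner g h - Lam / 2 * (c ^ 2 * inner h h) = captured g h / (2 * Lam)).
  { unfold c, captured. rewrite norm_sq, (inner_sym V X N x h g).
    destruct (inner_self_ge0 V X N x h) as [Hh | Hh].
    - field. lra.
    - rewrite (inner_null_orth V X N x g h (eq_sym Hh)), <- Hh.
      unfold Rdiv. rewrite Rinv_0. ring. }
  rewrite Hlin, Hquad in Hs. lra.
Qed.

(* Strong convexity bounds the suboptimality at p by the squared norm of any
   subgradient there (a Polyak-Lojasiewicz inequality): expand
   0 <= ||g + lambda (q - p)||^2. *)
Lemma gradient_domination (lam : R) (p g q : X -> V) :
  0 < lam -> strongly_convex V N x Rk lam -> is_subgradient V N x Rk p g ->
  2 * lam * (Rk p - Rk q) <= inner g g.
Proof.
  intros Hlam Hconv Hsub.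
  pose proof (Hconv p q g Hsub) as Hc. rewrite norm_sq in Hc.
  pose proof (norm_sub_scal_sq V X N x g (fsub V q p) (- lam)) as E.
  pose proof (pow2_ge_0 (norm (fsub V g (fscal V (- lam) (fsub V q p))))).
  nra.
Qed.

Lemma ngp_step_contraction (lam Lam gamma : R) (H : (X -> V) -> Prop) (p g h q : X -> V) :
  0 < lam -> 0 < Lam ->
  strongly_convex V N x Rk lam -> strongly_smooth V N x Rk Lam ->
  has_edge V N x H gamma ->
  is_subgradient V N x Rk p g -> is_projection V N x H g h ->
  Rk (fsub V p (fscal V (/ Lam * (inner h g / norm h ^ 2)) h)) - Rk q
  <= (1 - gamma ^ 2 * lam / Lam) * (Rk p - Rk q).
Proof.
  intros Hlam HLam Hconv Hsmooth Hedge Hsub Hproj.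
  pose proof (smooth_step_descent Lam p g h HLam Hsmooth Hsub) as Hdesc.
  pose proof (projection_captures V X N x H gamma g h Hedge Hproj) as Hcap.
  pose proof (gradient_domination lam p g q Hlam Hconv Hsub) as Hdom.
  assert (Hgain : 2 * lam * gamma ^ 2 * (Rk p - Rk q) <= captured g h).
  { pose proof (pow2_ge_0 gamma). nra. }
  assert (gamma ^ 2 * lam / Lam * (Rk p - Rk q) <= captured g h / (2 * Lam)).
  { replace (gamma ^ 2 * lam / Lam * (Rk p - Rk q))
      with (2 * lam * gamma ^ 2 * (Rk p - Rk q) / (2 * Lam)) by (field; lra).
    unfold Rdiv. apply Rmult_le_compat_r; [left; apply Rinv_0_lt_compat; lra | exact Hgain]. }
  lra.
Qed.

End Descent.

(* A nonnegative sequence contracted by a factor q at each of T steps decays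
   like q^T; a negative q forces the sequence to vanish. *)
Lemma geometric_decay (e : nat -> R) (q : R) (T : nat) :
  (forall t, 0 <= e t) ->
  (forall t, (1 <= t <= T)%nat -> e t <= q * e (t - 1)%nat) ->
  e T <= q ^ T * e 0%nat.
Proof.
  intros Hpos Hstep.
  assert (Hsucc : forall k, (k < T)%nat -> e (S k) <= q * e k).
  { intros k Hk. specialize (Hstep (S k) ltac:(lia)).
    now replace (S k - 1)%nat with k in Hstep by lia. }
  destruct (Rle_or_lt 0 q) as [Hq | Hq].
  - assert (Hdecay : forall k, (k <= T)%nat -> e k <= q ^ k * e 0%nat).
    { induction k as [|k IH]; intros Hk; [simpl; lra |].
      simpl. rewrite Rmult_assoc.
      apply Rle_trans with (1 := Hsucc k ltac:(lia)).
      apply Rmult_le_compat_l; [assumption | apply IH; lia]. }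
    now apply Hdecay.
  - destruct T as [|T]; [simpl; lra |].
    assert (Hzero : forall k, (k <= S T)%nat -> e k = 0).
    { induction k as [|k IH]; intros Hk.
      - pose proof (Hsucc 0%nat ltac:(lia)). pose proof (Hpos 0%nat).
        pose proof (Hpos 1%nat). nra.
      - pose proof (Hsucc k ltac:(lia)). pose proof (Hpos (S k)).
        rewrite IH in * by lia. lra. }
    rewrite !Hzero by lia. lra.
Qed.

(* Main theorem: the excess risk of the NGP iterates with step 1/Lambda decays
   geometrically at rate 1 - gamma^2 lambda / Lambda. *)
Theorem theorem3 (V : InnerProductSpace) (X : Type) (N : nat) (x : nat -> X)
  (HN : (0 < N)%nat)
  (Rk : (X -> V) -> R) (lam Lam : R) (Hlam : 0 < lam) (HLam : 0 < Lam)
  (Hconv : strongly_convex V N x Rk lam) (Hsmooth : strongly_smooth V N x Rk Lam)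
  (H : (X -> V) -> Prop) (gamma : R) (Hedge : has_edge V N x H gamma)
  (fstar : X -> V) (Hfstar : forall f, Rk fstar <= Rk f)
  (T : nat) (f grad hp : nat -> X -> V)
  (Hrun : ngp_iterates V N x Rk H (fun _ => / Lam) T f grad hp) :
  Rk (f T) - Rk fstar <= (1 - gamma ^ 2 * lam / Lam) ^ T * (Rk (f 0%nat) - Rk fstar).
Proof.
  apply (geometric_decay (fun t => Rk (f t) - Rk fstar)).
  - intro t. pose proof (Hfstar (f t)). lra.
  - intros t Ht. destruct (Hrun t Ht) as [Hsub [Hproj Hupdate]].
    replace (f t) with
      (fsub V (f (t - 1)%nat)
        (fscal V (/ Lam * (l2inner V N x (hp t) (grad t) / l2norm V N x (hp t) ^ 2)) (hp t)))
      by (extensionality y; symmetry; apply Hupdate).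
    exact (ngp_step_contraction V X N x Rk lam Lam gamma H _ _ _ fstar
             Hlam HLam Hconv Hsmooth Hedge Hsub Hproj).
Qed.
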